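(* Let $G$ be a cycle on $n_2\geq 3$ vertices. Then the graph $G^{\dagger}$ (for any choice of pairing in its construction) is neutral.
   Context: All graphs are finite and simple. A leaf is a vertex of degree one. The leaf-connecting operation on a graph $G$ produces $G^{\dagger}$ as follows: (1) for each vertex $v$ of $G$, attach $d_v$ new pendant vertices (leaves) to $v$; (2) repeatedly join a pair of leaves by an edge until no leaf is left (so the new pendant vertices are paired up by a perfect matching). For a graph $G=(V,E)$ with $m=|E|\geq1$ and degrees $d_u$, the assortativity coefficient is $$r(G)=\frac{m^{-1}\sum_{e_{uv}\in E} d_{u}d_{v}-\Big[m^{-1}\sum_{e_{uv}\in E} \tfrac{1}{2}(d_{u}+d_{v})\Big]^{2}}{m^{-1}\sum_{e_{uv}\in E} \tfrac{1}{2}(d^{2}_{u}+d^{2}_{v})-\Big[m^{-1}\sum_{e_{uv}\in E} \tfrac{1}{2}(d_{u}+d_{v})\Big]^{2}},$$ sums over edges counting each edge once, defined whenever the denominator is nonzero; $G$ is neutral if $r(G)$ is defined and equals $0$. *)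

From mathcomp Require Import all_boot all_order all_algebra.
Set Implicit Arguments. Unset Strict Implicit. Unset Printing Implicit Defensive.
Import Order.TTheory GRing.Theory Num.Theory.

Definition simple_graph (V : finType) (E : rel V) : Prop :=
  (forall x y, E x y = E y x) /\ (forall x, E x x = false).

Definition deg (V : finType) (E : rel V) (x : V) : nat := #|[set y | E x y]|.

Definition edges (V : finType) (E : rel V) : {set {set V}} :=
  [set A : {set V} | (#|A| == 2) &&
     [forall x in A, forall y in A, (x != y) ==> E x y]].

Local Open Scope ring_scope.

Definition nedges (V : finType) (E : rel V) : nat := #|edges E|.

Definition assort_prod (V : finType) (E : rel V) : rat :=
  (nedges E)%:R^-1 * \sum_(A in edges E) \prod_(u in A) (deg E u)%:R.
Definition assort_mean (V : finType) (E : rel V) : rat :=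
  (nedges E)%:R^-1 * \sum_(A in edges E) (2%:R^-1 * \sum_(u in A) (deg E u)%:R).
Definition assort_sq (V : finType) (E : rel V) : rat :=
  (nedges E)%:R^-1 * \sum_(A in edges E) (2%:R^-1 * \sum_(u in A) ((deg E u)%:R ^+ 2)).

Definition assort_num (V : finType) (E : rel V) : rat :=
  assort_prod E - (assort_mean E) ^+ 2.
Definition assort_den (V : finType) (E : rel V) : rat :=
  assort_sq E - (assort_mean E) ^+ 2.

(* assortativity coefficient r(G) (meaningful when [assort_defined]) *)
Definition assortativity (V : finType) (E : rel V) : rat :=
  assort_num E / assort_den E.
Definition assort_defined (V : finType) (E : rel V) : bool :=
  (1 <= nedges E)%N && (assort_den E != 0).

Definition neutral (V : finType) (E : rel V) : Prop :=
  assort_defined E /\ assortativity E = 0.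

(* The new pendant vertices: d_v of them attached to each vertex v. *)
Definition pendant (T : finType) (e : rel T) : finType :=
  {v : T & 'I_(deg e v)}.

(* G^dagger, given the pairing p of the pendant vertices (a perfect matching,
   encoded as a fixed-point-free involution, see [is_pairing]).
   Vertices: old vertices (inl) and pendant vertices (inr). *)
Definition dagger (T : finType) (e : rel T) (p : pendant e -> pendant e)
  : rel (T + pendant e)%type :=
  fun x y =>
    match x, y with
    | inl u, inl v => e u v
    | inl u, inr a => u == tag a
    | inr a, inl u => tag a == u
    | inr a, inr b => p a == b
    end.

Definition is_pairing (P : finType) (p : P -> P) : Prop :=
  (forall x, p (p x) = x) /\ (forall x, p x != x).

Definition is_cycle (T : finType) (e : rel T) (n : nat) : Prop :=
  exists f : 'I_n -> T, bijective f /\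
    forall i j : 'I_n, e (f i) (f j) = ((i.+1 %% n == j)%N || (j.+1 %% n == i)%N).

From mathcomp Require Import all_boot all_order all_algebra.
From mathcomp Require Import zify ring.
Set Implicit Arguments. Unset Strict Implicit. Unset Printing Implicit Defensive.
Import Order.TTheory GRing.Theory Num.Theory.
Local Open Scope ring_scope.

(* In G^dagger an original vertex v has degree 2 d_v and a pendant vertex has
   degree 2.  If G is r-regular on N vertices, double counting the edges of
   G^dagger gives rN/2 edges with end degrees (2r, 2r), rN with (2r, 2) and
   rN/2 with (2, 2).  Hence the mean end degree is r + 1 and the mean product
   of end degrees is (r + 1)^2, so the numerator of r(G^dagger) vanishes,
   while the denominator is (r - 1)^2.  A cycle is the case r = 2. *)

Lemma big_set2 (R : Type) (idx : R) (op : Monoid.com_law idx) (V : finType)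
    (u v : V) (g : V -> R) :
  u != v -> \big[op/idx]_(w in [set u; v]) g w = op (g u) (g v).
Proof. by move=> uv; rewrite big_setU1 ?inE // big_set1. Qed.

Section EdgeDoubleCounting.
Variables (V : finType) (E : rel V).
Hypothesis E_simple : simple_graph E.

Lemma adj_neq u v : E u v -> u != v.
Proof.
by case: E_simple => _ Eirr Euv; apply: contraTneq Euv => ->; rewrite Eirr.
Qed.

Lemma edges_set2 u v : E u v -> [set u; v] \in edges E.
Proof.
case: E_simple => Esym _ Euv; rewrite inE cards2 adj_neq //=.
apply/forallP=> x; apply/implyP=> /set2P xuv.
apply/forallP=> y; apply/implyP=> /set2P yuv.
by apply/implyP; case: xuv yuv => -> [] ->; rewrite ?eqxx // Esym.
Qed.

Lemma edgesP A : A \in edges E -> exists a b, E a b /\ A = [set a; b].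
Proof.
rewrite inE => /andP[/cards2P[a [b [ab ->]]] /forallP/(_ a)].
rewrite set21 => /forallP/(_ b); rewrite set22 ab /= => Eab.
by exists a, b.
Qed.

Lemma adj_fibre_set2 a b : E a b ->
  [pred uv : V * V | E uv.1 uv.2 && ([set uv.1; uv.2] == [set a; b])]
    =i [set (a, b); (b, a)].
Proof.
case: E_simple => Esym _ Eab [u v] /=; rewrite in_set2 !xpair_eqE.
apply/andP/idP => [[/adj_neq uv /eqP uvab] | ].
  move: (set21 u v) (set22 u v) uv; rewrite uvab.
  by do 2 case/set2P=> ->; rewrite ?eqxx ?orbT.
by case/orP=> /andP[/eqP-> /eqP->]; rewrite ?Eab // Esym Eab setUC.
Qed.

Lemma edge_double_count (R : nmodType) (F : {set V} -> R) :
  (\sum_(A in edges E) F A) *+ 2 = \sum_u \sum_(v | E u v) F [set u; v].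
Proof.
rewrite pair_big_dep.
rewrite (partition_big (fun uv => [set uv.1; uv.2]) (mem (edges E))) /=;
  last by case=> u v /edges_set2.
rewrite -sumrMnl; apply: eq_bigr => A /edgesP[a [b [Eab ->]]].
rewrite (eq_bigr (fun _ => F [set a; b])) => [|uv /andP[_ /eqP->] //].
rewrite sumr_const (eq_card (adj_fibre_set2 Eab)) cards2 xpair_eqE.
by rewrite (negbTE (adj_neq Eab)).
Qed.

End EdgeDoubleCounting.

Lemma sum_adj_const (R : nmodType) (V : finType) (E : rel V) x (c : R) :
  \sum_(y | E x y) c = c *+ deg E x.
Proof. by rewrite sumr_const; congr (_ *+ _); apply: eq_card => y; rewrite inE. Qed.

Section Dagger.
Variables (T : finType) (e : rel T) (p : pendant e -> pendant e).
Hypothesis e_simple : simple_graph e.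
Hypothesis p_pairing : is_pairing p.

Local Notation E := (dagger p).

Lemma dagger_simple : simple_graph E.
Proof.
case: e_simple p_pairing => esym eirr [pK p_neq]; split.
  case=> [u|a] [v|b] //=; rewrite ?esym ?(eq_sym u) //.
  by apply/eqP/eqP => <-.
by case=> [u|a] /=; rewrite ?eirr // (negbTE (p_neq a)).
Qed.

Lemma sum_pendant_at (R : nmodType) x (c : R) :
  \sum_(a : pendant e | tag a == x) c = c *+ deg e x.
Proof.
have := big_tag (op := +%R) (fun v (_ : 'I_(deg e v)) => c) x.
rewrite sumr_const card_ord => ->.
by apply: eq_bigr => a /eqP ax; rewrite (untagE _ _ ax).
Qed.

Lemma sum_dagger_inl (R : nmodType) (g : T + pendant e -> R) x :
  \sum_(v | E (inl x) v) g v =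
  \sum_(y | e x y) g (inl y) + \sum_(a | tag a == x) g (inr a).
Proof.
by rewrite big_sumType; congr (_ + _); apply: eq_bigl => a; rewrite /= eq_sym.
Qed.

Lemma sum_dagger_inr (R : nmodType) (g : T + pendant e -> R) a :
  \sum_(v | E (inr a) v) g v = g (inl (tag a)) + g (inr (p a)).
Proof. by rewrite big_sumType /= (big_pred1 (tag a)) ?(big_pred1 (p a)). Qed.

Lemma deg_dagger_inl x : deg E (inl x) = (deg e x).*2.
Proof.
apply/eqP; rewrite -(eqr_nat rat) -sum_adj_const sum_dagger_inl.
by rewrite sum_adj_const sum_pendant_at -addnn natrD.
Qed.

Lemma deg_dagger_inr a : deg E (inr a) = 2.
Proof. by apply/eqP; rewrite -(eqr_nat rat) -sum_adj_const sum_dagger_inr. Qed.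

Section Regular.
Variable r : nat.
Hypothesis e_regular : forall x, deg e x = r.

Lemma sum_dagger_adj (h : nat -> nat -> rat) :
  \sum_u \sum_(v | E u v) h (deg E u) (deg E v) =
  (h r.*2 r.*2 + h r.*2 2 + h 2 r.*2 + h 2 2) *+ (r * #|T|).
Proof.
rewrite big_sumType /= (partition_big (fun a : pendant e => tag a) predT) //=.
rewrite -big_split /= mulrnA -sumr_const; apply: eq_big => // x _.
have deg_inl y : deg E (inl y) = r.*2 by rewrite deg_dagger_inl e_regular.
rewrite sum_dagger_inl (deg_inl x).
rewrite [X in X + _ + _ = _](eq_bigr (fun=> h r.*2 r.*2)) => [|y _];
  last by rewrite (deg_inl y).
rewrite [X in _ + X + _ = _](eq_bigr (fun=> h r.*2 2)) => [|a _];
  last by rewrite (deg_dagger_inr a).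
rewrite [X in _ + X = _](eq_bigr (fun=> h 2 r.*2 + h 2 2)) => [|a _]; last first.
  by rewrite sum_dagger_inr !deg_dagger_inr deg_inl.
by rewrite sum_adj_const !sum_pendant_at e_regular -!mulrnDl addrA.
Qed.

Lemma sum_dagger_edges (F : {set T + pendant e} -> rat) (h : nat -> nat -> rat) :
  (forall u v, E u v -> F [set u; v] = h (deg E u) (deg E v)) ->
  \sum_(A in edges E) F A =
  (h r.*2 r.*2 + h r.*2 2 + h 2 r.*2 + h 2 2) * (r * #|T|)%:R / 2.
Proof.
move=> Fh; apply: (@mulIf _ 2) => //; rewrite mulfVK // mulr_natr.
rewrite (edge_double_count dagger_simple) mulr_natr -sum_dagger_adj.
by apply: eq_bigr => u _; apply: eq_bigr => v; apply: Fh.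
Qed.

Theorem dagger_regular_neutral : (2 <= r)%N -> (0 < #|T|)%N -> neutral E.
Proof.
move=> r_ge2 T_gt0; pose k : rat := (r * #|T|)%:R.
have k_gt0 : 0 < k by rewrite ltr0n muln_gt0 T_gt0 andbT; lia.
have k_neq0 : k != 0 by rewrite gt_eqF.
have r1_neq0 : r%:R - 1 != 0 :> rat by rewrite subr_eq0 pnatr_eq1; lia.
have adjE := adj_neq dagger_simple.
have m_eq : (nedges E)%:R = 2 * k.
  by rewrite -sumr_const (sum_dagger_edges (h := fun _ _ => 1)) //= -/k; field.
have prod_eq : \sum_(A in edges E) \prod_(u in A) (deg E u)%:R =
                2 * (r%:R + 1) ^+ 2 * k.
  rewrite (sum_dagger_edges (h := fun a b => a%:R * b%:R)) => [|u v /adjE uv].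
    by rewrite /= -/k -!muln2 !natrM; field.
  by rewrite big_set2.
have mean_eq : \sum_(A in edges E) (2^-1 * \sum_(u in A) (deg E u)%:R) =
                2 * (r%:R + 1) * k.
  rewrite (sum_dagger_edges (h := fun a b => 2^-1 * (a%:R + b%:R)))
    => [|u v /adjE uv].
    by rewrite /= -/k -!muln2 !natrM; field.
  by rewrite big_set2.
have sq_eq : \sum_(A in edges E) (2^-1 * \sum_(u in A) (deg E u)%:R ^+ 2) =
              4 * (r%:R ^+ 2 + 1) * k.
  rewrite (sum_dagger_edges (h := fun a b => 2^-1 * (a%:R ^+ 2 + b%:R ^+ 2)))
    => [|u v /adjE uv].
    by rewrite /= -/k -!muln2 !natrM; field.
  by rewrite big_set2.
clearbody k.
have num_eq : assort_num E = 0.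
  by rewrite /assort_num /assort_prod /assort_mean m_eq prod_eq mean_eq; field.
have den_eq : assort_den E = (r%:R - 1) ^+ 2.
  by rewrite /assort_den /assort_sq /assort_mean m_eq sq_eq mean_eq; field.
split; last by rewrite /assortativity num_eq mul0r.
by rewrite /assort_defined den_eq expf_neq0 // andbT -(ltr0n rat) m_eq mulr_gt0.
Qed.

End Regular.
End Dagger.

Lemma val_ordS n (i : 'I_n) : val (ordS i) = (if i.+1 == n then 0 else i.+1)%N.
Proof.
rewrite /=; case: eqP => [->|/eqP i1_neq]; first by rewrite modnn.
by rewrite modn_small // ltn_neqAle i1_neq ltn_ord.
Qed.

Lemma ordS_neq n (i : 'I_n) : (1 < n)%N -> ordS i != i.
Proof. by rewrite -val_eqE val_ordS /=; case: ifP => /eqP; lia. Qed.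

Lemma ordS_neq_ord_pred n (i : 'I_n) : (2 < n)%N -> ordS i != ord_pred i.
Proof.
rewrite -(can2_eq (@ordSK n) (@ord_predK n)) -val_eqE !val_ordS /=.
by have := ltn_ord i; do 2 case: ifP => /eqP; lia.
Qed.

Section Cycle.
Variables (n : nat) (T : finType) (e : rel T) (f : 'I_n -> T).
Hypothesis f_bij : bijective f.
Hypothesis f_adj :
  forall i j, e (f i) (f j) = (i.+1 %% n == j)%N || (j.+1 %% n == i)%N.

Lemma cycle_adjE i j : e (f i) (f j) = (j == ordS i) || (j == ord_pred i).
Proof.
by rewrite f_adj -(can2_eq (@ordSK n) (@ord_predK n)) -!val_eqE /= eq_sym.
Qed.

Lemma card_cycle : #|T| = n.
Proof. by rewrite -(bij_eq_card f_bij) card_ord. Qed.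

Lemma cycle_simple : (1 < n)%N -> simple_graph e.
Proof.
move=> n_gt1; have [g _ gK] := f_bij; split=> [x y|x].
  by rewrite -(gK x) -(gK y) !f_adj orbC.
rewrite -(gK x) cycle_adjE -(can2_eq (@ordSK n) (@ord_predK n)) eq_sym orbb.
exact/negbTE/ordS_neq.
Qed.

Lemma cycle_deg x : (2 < n)%N -> deg e x = 2.
Proof.
move=> n_gt2; have [g _ gK] := f_bij; rewrite -(gK x) /deg.
have -> : [set y | e (f (g x)) y] = f @: [set ordS (g x); ord_pred (g x)].
  apply/setP => y; rewrite -(gK y) inE cycle_adjE (mem_imset _ _ (bij_inj f_bij)).
  by rewrite in_set2.
by rewrite card_imset ?cards2 ?ordS_neq_ord_pred //; apply: bij_inj.
Qed.
End Cycle.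

Theorem lemma5 (T : finType) (e : rel T) (n : nat)
  (p : pendant e -> pendant e) :
  (3 <= n)%N -> is_cycle e n -> is_pairing p -> neutral (dagger p).
Proof.
move=> n_ge3 [f [f_bij f_adj]] p_pairing.
have e_simple := cycle_simple f_bij f_adj (ltnW n_ge3).
apply: (@dagger_regular_neutral _ _ _ e_simple p_pairing 2) => // [x|].
  exact: cycle_deg f_bij f_adj x n_ge3.
by rewrite (card_cycle f_bij) (leq_trans _ n_ge3).
Qed.
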